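(* One has: (1) If the conditions (1.2) $(\Gamma, T\rhd_{C})\Rightarrow (\Gamma\rhd_{C})$, and (4a) $(\Gamma_1\vdash T=T')\wedge(\Gamma_1,T,\Gamma_2\vdash S=S')\Rightarrow(\Gamma_1,T',\Gamma_2\vdash S=S')$ hold, then $(\Gamma\vdash S=S')\wedge(\Gamma\sim\Gamma')\Rightarrow (\Gamma'\vdash S=S')$. (2) If conditions (1.2), (4a) above as well as (1.3) $(\Gamma\vdash_{\widetilde{C}} r:R)\Rightarrow (\Gamma,R\rhd_{C})$, (4b) $(\Gamma_1\vdash T=T')\wedge(\Gamma_1,T,\Gamma_2\vdash o=o':S)\Rightarrow(\Gamma_1,T',\Gamma_2\vdash o=o':S)$, (4c) $(\Gamma\vdash S=S')\wedge(\Gamma\vdash o=o':S)\Rightarrow(\Gamma\vdash o=o':S')$ hold, then $(\Gamma\vdash o=o':S)\wedge((\Gamma,S)\sim(\Gamma',S'))\Rightarrow (\Gamma'\vdash o=o':S')$.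
   Context: Let $R$ be a monad on $Sets$ and $LM$ a left $R$-module with values in $Sets$. Let $C\subset \coprod_{n\ge 0}\prod_{i=0}^{n-1} LM(\{1,\dots,i\})$, $\widetilde{C}\subset \coprod_{n\ge 0}(\prod_{i=0}^{n} LM(\{1,\dots,i\}))\times R(\{1,\dots,n\})$, $Ceq\subset \coprod_{n\ge 0}(\prod_{i=0}^{n-1} LM(\{1,\dots,i\}))\times LM(\{1,\dots,n\})^2$ and $\widetilde{Ceq}\subset \coprod_{n\ge 0}(\prod_{i=0}^{n} LM(\{1,\dots,i\}))\times R(\{1,\dots,n\})^2$ be subsets. For $\Gamma=(T_1,\dots,T_n)$ write $(\Gamma\rhd_C)$ if $\Gamma\in C$; $(\Gamma\vdash_{\widetilde C} t:T)$ if $(T_1,\dots,T_n,T,t)\in\widetilde C$; $(\Gamma\vdash S_1=S_2)$ if $(T_1,\dots,T_n,S_1,S_2)\in Ceq$; and $(\Gamma\vdash o=o':S)$ if $(T_1,\dots,T_n,S,o,o')\in\widetilde{Ceq}$. Here $l(\Gamma)$ is the length of $\Gamma$ and $ft(T_1,\dots,T_n)=(T_1,\dots,T_{n-1})$. The relation $\sim$ on $C$ is defined recursively: for $\Gamma=(T_1,\dots,T_n)$, $\Gamma'=(T_1',\dots,T_n')$ in $C$, $\Gamma\sim\Gamma'$ iff $ft(\Gamma)\sim ft(\Gamma')$ and $(T_1,\dots,T_{n-1}\vdash T_n=T_n')$ (contexts of length $0$ are related). In the claim, $\Gamma,\Gamma'$ have equal length, and $\Gamma_1,\Gamma_2$ denote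 arbitrary (possibly empty) sequences. *)

From mathcomp Require Import ssreflect ssrfun ssrbool eqtype ssrnat fintype.
Set Implicit Arguments.
Unset Strict Implicit.
Unset Printing Implicit Defensive.

Record monad := Monad {
  mon :> Type -> Type;
  ret : forall X, X -> mon X;
  bind : forall X Y, (X -> mon Y) -> mon X -> mon Y;
  bind_ret : forall X (x : mon X), bind (@ret X) x = x;
  ret_bind : forall X Y (f : X -> mon Y) (x : X), bind f (ret x) = f x;
  bind_bind : forall X Y Z (f : X -> mon Y) (g : Y -> mon Z) (x : mon X),
      bind g (bind f x) = bind (fun a => bind g (f a)) x
}.

Record lmodule (R : monad) := LModule {
  lmod :> Type -> Type;
  lbind : forall X Y, (X -> R Y) -> lmod X -> lmod Y;
  lbind_ret : forall X (x : lmod X), lbind (@ret R X) x = x;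
  lbind_bind : forall X Y Z (f : X -> R Y) (g : Y -> R Z) (x : lmod X),
      lbind g (lbind f x) = lbind (fun a => bind g (f a)) x
}.

(* {1,...,i} is represented by the ordinal type 'I_i. *)

(* Ctx L n = prod_{i=0}^{n-1} L('I_i): sequences (T_1,...,T_n), T_{i+1} : L('I_i). *)
Inductive Ctx (L : Type -> Type) : nat -> Type :=
| cnil : Ctx L 0
| csnoc : forall n, Ctx L n -> L 'I_n -> Ctx L n.+1.
Arguments cnil {L}.

(* Ext L n m : a sequence of m further types continuing a context of length n
   (items at levels n, n+1, ..., n+m-1). *)
Inductive Ext (L : Type -> Type) (n : nat) : nat -> Type :=
| enil : Ext L n 0
| esnoc : forall m, Ext L n m -> L 'I_(m + n) -> Ext L n m.+1.
Arguments enil {L n}.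

Fixpoint capp (L : Type -> Type) n m (G : Ctx L n) (E : Ext L n m) : Ctx L (m + n) :=
  match E in Ext _ _ m0 return Ctx L (m0 + n) with
  | enil => G
  | esnoc m E' T => csnoc (capp G E') T
  end.

Inductive ctx_sim (L : Type -> Type) (C : forall n, Ctx L n -> Prop)
    (Ceq : forall n, Ctx L n -> L 'I_n -> L 'I_n -> Prop) :
    forall n, Ctx L n -> Ctx L n -> Prop :=
| sim0 : C 0 cnil -> ctx_sim C Ceq cnil cnil
| simS : forall n (G G' : Ctx L n) (T T' : L 'I_n),
    C n.+1 (csnoc G T) -> C n.+1 (csnoc G' T') ->
    ctx_sim C Ceq G G' -> Ceq n G T T' ->
    ctx_sim C Ceq (csnoc G T) (csnoc G' T').

(* Call a property of contexts stable if replacing one entry T by a T' with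
   Gamma_1 |- T = T' preserves it, whatever follows that entry; (4a) and (4b)
   say that type and term equality judgements are stable.  If Gamma ~ Gamma',
   then Gamma' is reached from Gamma by replacing its entries one at a time,
   from the last to the first, each replacement being licensed by the
   corresponding equation of Gamma ~ Gamma'.  So stable properties are
   transported along ~, which is part (1); for part (2), (4c) first moves
   o = o' : S to o = o' : S' over Gamma, and then transports along Gamma ~ Gamma'. *)
From mathcomp Require Import ssreflect ssrfun ssrbool eqtype ssrnat fintype.

Set Implicit Arguments.
Unset Strict Implicit.
Unset Printing Implicit Defensive.

Section Transport.
Variable L : Type -> Type.

Inductive same_suffix n (G G' : Ctx L n) : forall k, Ctx L k -> Ctx L k -> Prop :=
| same_suffix_base : same_suffix G G' G G'
| same_suffix_snoc k (X X' : Ctx L k) T :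
    same_suffix G G' X X' -> same_suffix G G' (csnoc X T) (csnoc X' T).

Lemma same_suffix_eq n (G : Ctx L n) k (X X' : Ctx L k) :
  same_suffix G G X X' -> X = X'.
Proof. by elim=> // k0 X0 X0' T _ ->. Qed.

Lemma same_suffix_snocl n (G G' : Ctx L n) T k (X X' : Ctx L k) :
  same_suffix (csnoc G T) (csnoc G' T) X X' -> same_suffix G G' X X'.
Proof.
elim=> [|k0 X0 X0' T0 _ IH]; last exact: same_suffix_snoc.
exact/same_suffix_snoc/same_suffix_base.
Qed.

Lemma same_suffix_split n (G G' : Ctx L n) T T' k (X X' : Ctx L k) :
  same_suffix (csnoc G T) (csnoc G' T') X X' ->
  exists Y, same_suffix (csnoc G T) (csnoc G T') X Y /\
            same_suffix (csnoc G T') (csnoc G' T') Y X'.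
Proof.
elim=> [|k0 X0 X0' T0 _ [Y [XY YX']]].
  by exists (csnoc G T'); split; apply: same_suffix_base.
by exists (csnoc Y T0); split; apply: same_suffix_snoc.
Qed.

Lemma same_suffix_capp n (G : Ctx L n) T T' k (X X' : Ctx L k) :
  same_suffix (csnoc G T) (csnoc G T') X X' ->
  exists m (E : Ext L n.+1 m) (e : m + n.+1 = k),
    X = eq_rect _ (Ctx L) (capp (csnoc G T) E) _ e /\
    X' = eq_rect _ (Ctx L) (capp (csnoc G T') E) _ e.
Proof.
elim=> [|k0 X0 X0' T0 _ [m [E [e [-> ->]]]]]; first by exists 0, enil, erefl.
move: T0; clear X0 X0'; case: k0 / e => T0.
by exists m.+1, (esnoc E T0), erefl.
Qed.

(* The extra data [a : A k] lets judgements such as [Gamma |- o = o' : S] be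
   seen as properties of the context Gamma. *)
Variables (A : nat -> Type) (Q : forall k, Ctx L k -> A k -> Prop).
Variables (C : forall n, Ctx L n -> Prop)
          (Ceq : forall n, Ctx L n -> L 'I_n -> L 'I_n -> Prop).
Hypothesis Q_stable :
  forall n m (G1 : Ctx L n) (T T' : L 'I_n) (G2 : Ext L n.+1 m) a,
    Ceq G1 T T' -> Q (capp (csnoc G1 T) G2) a -> Q (capp (csnoc G1 T') G2) a.

Lemma ctx_sim_transport n (G G' : Ctx L n) : ctx_sim C Ceq G G' ->
  forall k (X X' : Ctx L k) a, same_suffix G G' X X' -> Q X a -> Q X' a.
Proof.
elim=> [_|n0 G0 G0' T T' _ _ _ IH TT'] k X X' a; first by move/same_suffix_eq->.
case/same_suffix_split=> Y [XY YX'] QX.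
apply: (IH _ Y); first exact: same_suffix_snocl YX'.
have [m [E [e [EX EY]]]] := same_suffix_capp XY.
move: a QX; rewrite EX EY; case: k / e {X X' XY YX' EX EY Y} => a /=.
exact: Q_stable.
Qed.

Lemma ctx_sim_same n (G G' : Ctx L n) a :
  ctx_sim C Ceq G G' -> Q G a -> Q G' a.
Proof. by move=> GG'; apply: ctx_sim_transport GG' _ _ _ _ (same_suffix_base _ _). Qed.

End Transport.

Definition cbehead L n (X : Ctx L n.+1) : Ctx L n :=
  match X in Ctx _ k return Ctx L k.-1 with cnil => cnil | csnoc _ G _ => G end.

Definition clast L n (X : Ctx L n.+1) : L 'I_n :=
  match X in Ctx _ k return if k is k'.+1 then L 'I_k' else unit with
  | cnil => tt
  | csnoc _ _ T => T
  end.

Lemma ctx_sim_snoc L C Ceq n (G G' : Ctx L n) T T' :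
  ctx_sim C Ceq (csnoc G T) (csnoc G' T') -> ctx_sim C Ceq G G' /\ Ceq n G T T'.
Proof.
have inv k (X Y : Ctx L k) : ctx_sim C Ceq X Y ->
    match k return Ctx L k -> Ctx L k -> Prop with
    | 0 => fun _ _ => True
    | k'.+1 => fun X Y => ctx_sim C Ceq (cbehead X) (cbehead Y) /\
                          Ceq k' (cbehead X) (clast X) (clast Y)
    end X Y by case.
exact: inv.
Qed.

Theorem lemma6p3 (R : monad) (LM : lmodule R)
  (C : forall n, Ctx LM n -> Prop)
  (Ct : forall n, Ctx LM n -> LM 'I_n -> R 'I_n -> Prop)
  (Ceq : forall n, Ctx LM n -> LM 'I_n -> LM 'I_n -> Prop)
  (Ceqt : forall n, Ctx LM n -> LM 'I_n -> R 'I_n -> R 'I_n -> Prop) :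
  let H12 := forall n (G : Ctx LM n) (T : LM 'I_n), C n.+1 (csnoc G T) -> C n G in
  let H4a := forall n m (G1 : Ctx LM n) (T T' : LM 'I_n) (G2 : Ext LM n.+1 m)
               (S S' : LM 'I_(m + n.+1)),
      Ceq n G1 T T' -> Ceq _ (capp (csnoc G1 T) G2) S S' ->
      Ceq _ (capp (csnoc G1 T') G2) S S' in
  let H13 := forall n (G : Ctx LM n) (Rr : LM 'I_n) (r : R 'I_n),
      Ct n G Rr r -> C n.+1 (csnoc G Rr) in
  let H4b := forall n m (G1 : Ctx LM n) (T T' : LM 'I_n) (G2 : Ext LM n.+1 m)
               (S : LM 'I_(m + n.+1)) (o o' : R 'I_(m + n.+1)),
      Ceq n G1 T T' -> Ceqt _ (capp (csnoc G1 T) G2) S o o' ->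
      Ceqt _ (capp (csnoc G1 T') G2) S o o' in
  let H4c := forall n (G : Ctx LM n) (S S' : LM 'I_n) (o o' : R 'I_n),
      Ceq n G S S' -> Ceqt n G S o o' -> Ceqt n G S' o o' in
  (H12 -> H4a ->
     forall n (G G' : Ctx LM n) (S S' : LM 'I_n),
       Ceq n G S S' -> ctx_sim C Ceq G G' -> Ceq n G' S S')
  /\
  (H12 -> H4a -> H13 -> H4b -> H4c ->
     forall n (G G' : Ctx LM n) (S S' : LM 'I_n) (o o' : R 'I_n),
       Ceqt n G S o o' -> ctx_sim C Ceq (csnoc G S) (csnoc G' S') ->
       Ceqt n G' S' o o').
Proof.
move=> H12 H4a H13 H4b H4c; split.
- move=> _ type_eq_stable n G G' S S' SS' GG'.
  apply: (@ctx_sim_same _ (fun k => (LM 'I_k * LM 'I_k)%type)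
            (fun k X a => Ceq k X a.1 a.2) C Ceq _ _ _ _ (S, S') GG') => //.
  by move=> ? ? ? ? ? ? []; apply: type_eq_stable.
- move=> _ _ _ term_eq_stable conv n G G' S S' o o' oo' GSG'S'.
  have [GG' SS'] := ctx_sim_snoc GSG'S'.
  apply: (@ctx_sim_same _ (fun k => (LM 'I_k * R 'I_k * R 'I_k)%type)
            (fun k X a => Ceqt k X a.1.1 a.1.2 a.2) C Ceq _ _ _ _ (S', o, o') GG').
  + by move=> ? ? ? ? ? ? [[]]; apply: term_eq_stable.
  + exact: conv SS' oo'.
Qed.
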